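(* Let $G$ be a simple undirected graph of order $n\geq 6$ such that $\rho(G)\geq \rho(K_{2,n-2})$. Then $G$ contains a chorded cycle unless $G\cong K_{2,n-2}$.
   Context: All graphs are finite, simple and undirected. $\rho(G)$ denotes the spectral radius of $G$, i.e. the largest eigenvalue of its adjacency matrix $A(G)=(a_{u,v})$, where $a_{u,v}=1$ if $u,v$ are adjacent and $a_{u,v}=0$ otherwise. $K_{2,n-2}$ is the complete bipartite graph with parts of sizes $2$ and $n-2$. A chord of a cycle $C$ is an edge joining two non-consecutive vertices of $C$. A cycle $C$ in a graph $G$ is chorded if the subgraph of $G$ induced by the vertex set of $C$ contains at least one chord of $C$. *)

From HB Require Import structures.
From mathcomp Require Import all_boot all_order all_algebra all_fingroup.
From mathcomp Require Import reals.
Set Implicit Arguments. Unset Strict Implicit. Unset Printing Implicit Defensive.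
Import Order.TTheory GRing.Theory Num.Theory.
Local Open Scope ring_scope.

Definition simple_graph (n : nat) (g : rel 'I_n) : Prop :=
  symmetric g /\ irreflexive g.

Definition adjmx (R : realType) (n : nat) (g : rel 'I_n) : 'M[R]_n :=
  \matrix_(i, j) (g i j)%:R.

Definition is_spectral_radius (R : realType) (n : nat) (A : 'M[R]_n) (r : R) : Prop :=
  eigenvalue A r /\ (forall a : R, eigenvalue A a -> a <= r).

(* K_{2,n-2} on 'I_n: parts {0,1} and {2,...,n-1}. *)
Definition K2 (n : nat) : rel 'I_n := fun i j => (i < 2)%N != (j < 2)%N.

Definition graph_iso (n : nat) (g h : rel 'I_n) : Prop :=
  exists f : {perm 'I_n}, forall i j, g i j = h (f i) (f j).

Definition is_cycle (n : nat) (g : rel 'I_n) (c : seq 'I_n) : Prop :=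
  (3 <= size c)%N /\ uniq c /\ path.cycle g c.

Definition has_chord (n : nat) (g : rel 'I_n) (c : seq 'I_n) : Prop :=
  exists x y, [/\ x \in c, y \in c, g x y, y != next c x & x != next c y].

Definition has_chorded_cycle (n : nat) (g : rel 'I_n) : Prop :=
  exists c, is_cycle g c /\ has_chord g c.

From HB Require Import structures.
From mathcomp Require Import all_boot all_order all_algebra all_fingroup.
From mathcomp Require Import reals.
From mathcomp Require Import lra zify.
From Stdlib Require Import Classical.
Set Implicit Arguments. Unset Strict Implicit. Unset Printing Implicit Defensive.
Import Order.TTheory GRing.Theory Num.Theory.
Local Open Scope ring_scope.

(* Suppose G has no chorded cycle and rho := rho(G) >= rho(K_{2,n-2}) = sqrt(2n - 4).
   Normalising the absolute value of a rho-eigenvector gives y with 0 <= y <= 1,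
   y u = 1 and rho y <= A y.  Around u the other vertices split into the neighbours
   nbrT lying on a triangle through u, the remaining neighbours nbrP, the
   non-neighbours farT adjacent to nbrT, and the rest farZ.  As no 4-, 5- or 6-cycle
   has a chord, a neighbour of u or a vertex of farT has at most one neighbour in
   N(u), a vertex of farZ has all its neighbours of N(u) in nbrP, and a vertex of
   nbrP has at most one neighbour in farZ seeing more than two vertices of N(u).
   Applying rho y <= A y twice at u, and once summed over nbrT, gives
     rho^2 <= |nbrP| + |nbrT| + s + |farT| + C   and   rho s <= |nbrT| + s + |farT|,
   where s is the y-weight of nbrT and C the number of edges between farZ and N(u).
   Against rho^2 >= 2n - 4 this forces nbrT to be empty and C to reach its maximum
   2 |farZ| + |nbrP| - 2.  In that extremal configuration G is K_{2,n-2}: its two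
   hubs are either the two vertices of nbrP, or u and the only vertex of farZ
   seeing more than two neighbours of u. *)

Lemma card_gt1_neq (T : finType) (A : {set T}) a :
  (1 < #|A|)%N -> exists2 x, x \in A & x != a.
Proof.
rewrite (cardsD1 a) => A_gt1; have /card_gt0P[x] : (0 < #|A :\ a|)%N.
  by move: A_gt1; case: (a \in A); lia.
by rewrite !inE => /andP[xa xA]; exists x.
Qed.

Lemma card_gt2_neq2 (T : finType) (A : {set T}) a b :
  (2 < #|A|)%N -> exists x, [/\ x \in A, x != a & x != b].
Proof.
move=> A_gt2; have /card_gt0P[x] : (0 < #|A :\: [set a; b]|)%N.
  have := subset_leq_card (subsetIr A [set a; b]).
  by rewrite cardsD cards2; case: (a != b); lia.
by rewrite !inE negb_or => /andP[/andP[xa xb] xA]; exists x.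
Qed.

Lemma sum_nat_card (T : finType) (A : {set T}) (P : pred T) :
  (\sum_(v in A) P v)%N = #|[set v in A | P v]|.
Proof.
by rewrite -big_mkcondr /= sum1_card; apply: eq_card => v; rewrite !inE.
Qed.

Lemma sum_mem_card (T : finType) (A : {set T}) : (\sum_i (i \in A))%N = #|A|.
Proof. by rewrite -sum1_card [RHS]big_mkcond; apply: eq_bigr => i _; case: (i \in A). Qed.

Lemma sum_eq_bound (T : finType) (A : {set T}) (f : T -> nat) m :
  (forall i, i \in A -> f i <= m)%N -> (m * #|A| <= \sum_(i in A) f i)%N ->
  forall i, i \in A -> f i = m.
Proof.
move=> f_le sum_ge i iA.
have [le_sum eq_sum] :=
  @leqif_sum _ (mem A) _ f (fun=> m) (fun j jA => leqif_eq (f_le j jA)).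
have /forall_inP/(_ i iA)/eqP // : [forall (j | j \in A), f j == m].
by rewrite -eq_sum eqn_leq le_sum sum_nat_const mulnC.
Qed.

Lemma ler_sum_subset (R : numDomainType) (T : finType) (A B : {set T}) (F : T -> R) :
  A \subset B -> (forall i, i \in B -> 0 <= F i) ->
  \sum_(i in A) F i <= \sum_(i in B) F i.
Proof.
move=> /subsetP AB F0; rewrite big_mkcond [X in _ <= X]big_mkcond /=.
apply: ler_sum => i _.
case: ifPn => [/AB -> // | _].
by case: ifPn => // /F0.
Qed.

Section ChordedCycleFree.
Variables (n : nat) (g : rel 'I_n).
Hypotheses (gsym : symmetric g) (girr : irreflexive g).
Hypothesis gNC : ~ has_chorded_cycle g.

Lemma adj_neq x y : g x y -> x != y.
Proof. by apply: contraTneq => ->; rewrite girr. Qed.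

Lemma chord02_free (x0 x1 x2 x3 : 'I_n) s :
  uniq [:: x0, x1, x2, x3 & s] -> path.cycle g [:: x0, x1, x2, x3 & s] ->
  ~~ g x0 x2.
Proof.
move=> c_uniq c_cycle; apply/negP => x02; apply: gNC.
exists [:: x0, x1, x2, x3 & s]; split; first by [].
have /= /andP[x0_notin /andP[x1_notin _]] := c_uniq.
move: x0_notin x1_notin; rewrite !inE !negb_or => /and4P[_ n02 n03 _] /andP[n12 _].
exists x0, x2; split; rewrite ?inE ?eqxx ?orbT //=.
- by rewrite eqxx eq_sym.
- by rewrite (eq_sym x2 x0) (negbTE n02) (eq_sym x2 x1) (negbTE n12) eqxx.
Qed.

Lemma chord03_free (x0 x1 x2 x3 x4 : 'I_n) s :
  uniq [:: x0, x1, x2, x3, x4 & s] -> path.cycle g [:: x0, x1, x2, x3, x4 & s] ->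
  ~~ g x0 x3.
Proof.
move=> c_uniq c_cycle; apply/negP => x03; apply: gNC.
exists [:: x0, x1, x2, x3, x4 & s]; split; first by [].
have /= /andP[x0_notin /andP[x1_notin /andP[x2_notin _]]] := c_uniq.
move: x0_notin x1_notin x2_notin; rewrite !inE !negb_or.
move=> /and5P[n01 _ n03 n04 _] /and4P[_ n13 _ _] /andP[n23 _].
exists x0, x3; split; rewrite ?inE ?eqxx ?orbT //=.
- by rewrite (negbTE n01) eqxx eq_sym.
- rewrite (eq_sym x3 x0) (negbTE n03) (eq_sym x3 x1) (negbTE n13).
  by rewrite (eq_sym x3 x2) (negbTE n23) eqxx.
Qed.

Ltac uniq_adj := rewrite /= !inE !negb_or !andbT;
  repeat (apply/andP; split);
  by [| rewrite eq_sym | apply: adj_neq | rewrite eq_sym; apply: adj_neq].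

Lemma diamond_free a b c d : b != d ->
  g a b -> g b c -> g c d -> g d a -> ~~ g a c.
Proof.
move=> bd ab bc cd da; apply/negP => ac; suff: ~~ g a c by rewrite ac.
by apply: (@chord02_free a b c d [::]); [uniq_adj | rewrite /= ab bc cd da].
Qed.

Lemma chorded_pentagon_free a b c d e : a != d -> b != d -> b != e -> c != e ->
  g a b -> g b c -> g c d -> g d e -> g e a -> ~~ g a c.
Proof.
move=> ad bd be ce ab bc cd de ea; apply/negP => ac; suff: ~~ g a c by rewrite ac.
by apply: (@chord02_free a b c d [:: e]); [uniq_adj | rewrite /= ab bc cd de ea].
Qed.

Lemma hexagon_long_chord_free a b c d e f :
  a != c -> a != e -> b != d -> b != e -> b != f -> c != e -> c != f -> d != f ->
  g a b -> g b c -> g c d -> g d e -> g e f -> g f a -> ~~ g a d.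
Proof.
move=> ac ae bd be bf ce cf df ab bc cd de ef fa; apply/negP => ad.
suff: ~~ g a d by rewrite ad.
apply: (@chord03_free a b c d e [:: f]); first by uniq_adj.
by rewrite /= ab bc cd de ef fa.
Qed.

Variable u : 'I_n.

Definition in_triangle v := g u v && [exists w, g u w && g w v].
Definition nbr := [set v | g u v].
Definition nbrT := [set v | in_triangle v].
Definition nbrP := [set v | g u v && ~~ [exists w, g u w && g w v]].
Definition far := [set w | (w != u) && ~~ g u w].
Definition sees_nbrT w := [exists a, in_triangle a && g a w].
Definition farT := [set w in far | sees_nbrT w].
Definition farZ := [set w in far | ~~ sees_nbrT w].
Definition common w := [set v | g u v && g w v].
Definition ncommon w := #|common w|.

Lemma nbr_far_neq a w : g u a -> ~~ g u w -> a != w.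
Proof. by move=> ua; apply: contraNneq => <-. Qed.

Ltac adj_side := solve [ assumption | by rewrite gsym | by rewrite eq_sym
  | by apply: adj_neq | by apply: adj_neq; rewrite gsym
  | by apply: nbr_far_neq | by rewrite eq_sym; apply: nbr_far_neq ].

Lemma card_partition :
  n = (1 + #|nbrP| + #|nbrT| + #|farT| + #|farZ|)%N.
Proof.
have split_one i : (1 = (i \in [set u]) + (i \in nbrP) + (i \in nbrT) +
                        (i \in farT) + (i \in farZ))%N.
  rewrite !inE /in_triangle /sees_nbrT.
  case: (eqVneq i u) => [-> | _]; first by rewrite girr.
  by case: (g u i); case: [exists w, _]; case: [exists a, _].
transitivity (\sum_(i : 'I_n) 1)%N; first by rewrite sum1_card card_ord.
by rewrite (eq_bigr _ (fun i _ => split_one i)) !big_split /= !sum_mem_card cards1.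
Qed.

Lemma card_nbr : #|nbr| = (#|nbrP| + #|nbrT|)%N.
Proof.
rewrite -!sum_mem_card -big_split /=; apply: eq_bigr => i _.
by rewrite !inE /in_triangle; case: (g u i); case: [exists w, _].
Qed.

Lemma sum_nbr_adj i : (\sum_(v in nbr) g i v)%N = ncommon i.
Proof. by rewrite sum_nat_card; apply: eq_card => v; rewrite !inE. Qed.

Lemma ncommon_nbr_le1 w : g u w -> (ncommon w <= 1)%N.
Proof.
move=> uw; apply/card_le1_eqP => v v'; rewrite !inE => /andP[uv wv] /andP[uv' wv'].
apply/eqP/negPn/negP => vv'; suff: ~~ g u w by rewrite uw.
by apply: (diamond_free (b:=v) (d:=v')); adj_side.
Qed.

Lemma ncommon_nbrP w : g u w -> ~~ in_triangle w -> ncommon w = 0%N.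
Proof.
move=> uw /negP wT; apply/eqP; rewrite cards_eq0; apply/eqP/setP => v; rewrite !inE.
apply/negP => /andP[uv wv]; apply: wT; rewrite /in_triangle uw /=.
by apply/existsP; exists v; rewrite uv gsym.
Qed.

Lemma ncommon_farT_le1 w : w \in farT -> (ncommon w <= 1)%N.
Proof.
rewrite !inE => /andP[/andP[wu uw] /existsP[a /andP[aT aw]]].
case/andP: aT => ua /existsP[b /andP[ub ba]].
suff only_a v : v \in common w -> v = a by apply/card_le1_eqP => x x' /only_a -> /only_a ->.
rewrite inE => /andP[uv wv]; apply/eqP/negPn/negP => va.
case: (eqVneq v b) => [vb | vb].
  subst v; suff: ~~ g a b by rewrite gsym ba.
  by apply: (diamond_free (b:=w) (d:=u)); adj_side.
suff: ~~ g a u by rewrite gsym ua.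
by apply: (chorded_pentagon_free (b:=b) (d:=v) (e:=w)); adj_side.
Qed.

Lemma common_farZ_sub w : w \in farZ -> common w \subset nbrP.
Proof.
rewrite !inE => /andP[_ /negP noT]; apply/subsetP => v; rewrite !inE => /andP[uv wv].
rewrite uv /=; apply/negP => vT; apply: noT; apply/existsP; exists v.
by rewrite /in_triangle uv vT /= gsym.
Qed.

Lemma far_three_commons_free z z' a b c : z \in far -> z' \in far -> z != z' ->
  g u a -> g u b -> g u c -> a != b -> c != a -> c != b ->
  g z a -> g z b -> g z' b -> g z' c -> False.
Proof.
rewrite !inE => /andP[zu uz] /andP[z'u uz'] zz' ua ub uc ab ca cb za zb z'b z'c.
suff: ~~ g u b by rewrite ub.
by apply: (hexagon_long_chord_free (b:=a) (c:=z) (e:=z') (f:=c)); adj_side.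
Qed.

Definition bigZ := [set z in farZ | 2 < ncommon z]%N.
Definition smallZ := [set z in farZ | ~~ (2 < ncommon z)%N].
Definition sum_ncommon (A : {set 'I_n}) := (\sum_(z in A) ncommon z)%N.

Lemma farZ_far z : z \in farZ -> z \in far.
Proof. by rewrite inE => /andP[]. Qed.

Lemma bigZ_nbr_le1 v : g u v -> (#|[set z in bigZ | g z v]| <= 1)%N.
Proof.
move=> uv; apply/card_le1_eqP => z z'.
move=> /setIdP[/setIdP[zZ z_big] zv] /setIdP[/setIdP[zZ' z'_big] z'v].
apply/eqP/negPn/negP => zz'.
have [a za av] := card_gt1_neq v (ltnW z_big).
have [c [z'c ca cv]] := card_gt2_neq2 a v z'_big.
move: za z'c; rewrite !inE => /andP[ua za] /andP[uc z'c].
apply: (far_three_commons_free (farZ_far zZ) (farZ_far zZ') _ ua uv uc av ca cv) => //.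
by rewrite eq_sym.
Qed.

Lemma ncommon_farZ z : z \in farZ -> ncommon z = (\sum_(v in nbrP) g z v)%N.
Proof.
move=> zZ; rewrite sum_nat_card; apply: eq_card => v; rewrite !inE.
apply/idP/idP => [vz | /andP[/andP[-> _] ->] //].
have := subsetP (common_farZ_sub zZ) v; rewrite !inE vz => /(_ isT) /andP[_ ->].
by rewrite andbT.
Qed.

Lemma sum_ncommon_bigZ : (sum_ncommon bigZ <= #|nbrP|)%N.
Proof.
rewrite /sum_ncommon (eq_bigr (fun z => \sum_(v in nbrP) g z v)%N); last first.
  by move=> z; rewrite inE => /andP[zZ _]; apply: ncommon_farZ.
rewrite exchange_big /= -sum1_card; apply: leq_sum => v vP.
by rewrite sum_nat_card; apply: bigZ_nbr_le1; move: vP; rewrite inE => /andP[].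
Qed.

Lemma sum_ncommon_smallZ : (sum_ncommon smallZ <= 2 * #|smallZ|)%N.
Proof.
by rewrite mulnC -sum_nat_const; apply: leq_sum => z; rewrite inE => /andP[_]; lia.
Qed.

Lemma sum_ncommon_farZE :
  sum_ncommon farZ = (sum_ncommon bigZ + sum_ncommon smallZ)%N.
Proof.
by rewrite /sum_ncommon (bigID (fun z => 2 < ncommon z)%N); congr (_ + _)%N;
  apply: eq_bigl => z; rewrite !inE.
Qed.

Lemma card_farZE : #|farZ| = (#|bigZ| + #|smallZ|)%N.
Proof.
by rewrite -!sum1_card (bigID (fun z => 2 < ncommon z)%N); congr (_ + _)%N;
  apply: eq_bigl => z; rewrite !inE.
Qed.

Lemma sum_ncommon_bigZ_eq0 : #|bigZ| = 0%N -> sum_ncommon bigZ = 0%N.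
Proof. by move/card0_eq => B0; rewrite /sum_ncommon big_pred0 // => z; rewrite B0. Qed.

Lemma sum_ncommon_farZ_le :
  (2 <= #|nbrP| -> sum_ncommon farZ + 2 <= 2 * #|farZ| + #|nbrP|)%N.
Proof.
move=> P2; rewrite sum_ncommon_farZE card_farZE.
have := sum_ncommon_smallZ; have := sum_ncommon_bigZ.
case: (posnP #|bigZ|) => [/sum_ncommon_bigZ_eq0 -> | ]; lia.
Qed.

Lemma sum_ncommon_farZ_le_mul : (sum_ncommon farZ <= #|nbrP| * #|farZ|)%N.
Proof.
rewrite mulnC -sum_nat_const; apply: leq_sum => z zZ.
exact/subset_leq_card/common_farZ_sub.
Qed.

Lemma sum_ncommon_farZ_cases :
  [\/ #|nbrP| = 0 /\ sum_ncommon farZ = 0,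
      #|nbrP| = 1 /\ sum_ncommon farZ <= #|farZ|
    | 2 <= #|nbrP| /\ sum_ncommon farZ + 2 <= 2 * #|farZ| + #|nbrP|]%N.
Proof.
move: sum_ncommon_farZ_le sum_ncommon_farZ_le_mul.
by case: #|nbrP| => [|[|p]] le_lin le_mul; [apply: Or31 | apply: Or32 | apply: Or33]; lia.
Qed.

Lemma sum_nbr_far_le :
  (\sum_(v in nbr) \sum_(i in far) g i v <= #|farT| + sum_ncommon farZ)%N.
Proof.
rewrite exchange_big /= (eq_bigr _ (fun i _ => sum_nbr_adj i)).
rewrite (bigID sees_nbrT) /=; apply: leq_add.
  rewrite -sum1_card [X in (X <= _)%N](eq_bigl (fun i => i \in farT)) => [|i].
    by apply: leq_sum => i; apply: ncommon_farT_le1.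
  by rewrite !inE.
by rewrite /sum_ncommon; apply/eq_leq/eq_bigl => i; rewrite !inE.
Qed.

Lemma sum_nbrT_far_le : (\sum_(w in nbrT) \sum_(i in far) g i w <= #|farT|)%N.
Proof.
rewrite exchange_big /= -sum_mem_card big_mkcond /=; apply: leq_sum => i _.
case: ifPn => // iF; rewrite sum_nat_card inE iF /=.
case: (boolP (sees_nbrT i)) => iT.
  apply: (@leq_trans (ncommon i)); last by apply: ncommon_farT_le1; rewrite inE iF.
  by apply/subset_leq_card/subsetP => w; rewrite !inE => /andP[/andP[-> _] ->].
rewrite leqn0 cards_eq0; apply/eqP/setP => w; rewrite !inE.
apply/negP => /andP[wT iw]; move/negP: iT; apply; apply/existsP; exists w.
by rewrite gsym iw andbT.
Qed.

Lemma common_full z : z \in farZ -> ncommon z = #|nbrP| -> {in nbrP, forall v, g z v}.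
Proof.
move=> zZ zfull v vP; have := subset_cardP zfull (common_farZ_sub zZ) v.
by rewrite vP inE => /andP[_ ->].
Qed.

Definition K2_hubs (a b : 'I_n) :=
  [/\ a != b, ~~ g a b, (forall x, x != a -> x != b -> g x a && g x b) &
      (forall x y, x != a -> x != b -> y != a -> y != b -> ~~ g x y)].

Section TightCase.
Hypothesis no_triangle : forall v, ~~ in_triangle v.
Hypothesis nbrP_ge2 : (2 <= #|nbrP|)%N.
Hypothesis tight : (2 * #|farZ| + #|nbrP| <= sum_ncommon farZ + 2)%N.

Lemma nbr_nbrP v : g u v -> v \in nbrP.
Proof. by move=> uv; have := no_triangle v; rewrite inE /in_triangle uv. Qed.

Lemma far_farZ x : x != u -> ~~ g u x -> x \in farZ.
Proof.
move=> xu ux; rewrite !inE xu ux /=.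
by apply/existsPn => a; rewrite (negbTE (no_triangle a)).
Qed.

Lemma tight_counts : sum_ncommon smallZ = (2 * #|smallZ|)%N /\
  (#|bigZ| = 0%N /\ #|nbrP| = 2 \/ #|bigZ| = 1%N /\ sum_ncommon bigZ = #|nbrP|).
Proof.
move: tight; rewrite sum_ncommon_farZE card_farZE.
have := sum_ncommon_smallZ; have := sum_ncommon_bigZ.
have big_ge : (3 * #|bigZ| <= sum_ncommon bigZ)%N.
  by rewrite mulnC -sum_nat_const; apply: leq_sum => z; rewrite inE => /andP[].
case: (posnP #|bigZ|) => [B0 | ]; first rewrite (sum_ncommon_bigZ_eq0 B0); lia.
Qed.

Lemma smallZ_ncommon z : z \in smallZ -> ncommon z = 2%N.
Proof.
apply: sum_eq_bound; first by move=> x; rewrite inE => /andP[_]; lia.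
by case: tight_counts; rewrite /sum_ncommon => ->.
Qed.

Lemma hubs_of_no_bigZ : #|bigZ| = 0%N -> exists a b, K2_hubs a b.
Proof.
move=> B0; have P2 : #|nbrP| = 2 by case: tight_counts => _ [[] | []] //; rewrite B0.
have [a [b [aP bP ab]]] : exists a b, [/\ a \in nbrP, b \in nbrP & a != b].
  by apply/card_gt1P; rewrite P2.
have nbrPE : nbrP = [set a; b].
  by apply/eqP; rewrite eq_sym eqEcard cards2 ab P2 subUset !sub1set aP bP.
have [ua ub] : g u a /\ g u b by move: aP bP; rewrite !inE => /andP[-> _] /andP[-> _].
have farZ_ab z : z \in farZ -> g z a && g z b.
  move=> zZ; have zS : z \in smallZ.
    by rewrite inE zZ /=; apply/negP => z_big; have := card0_eq B0 z; rewrite inE zZ z_big.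
  by rewrite !(common_full zZ) // ?smallZ_ncommon ?P2 // nbrPE !inE eqxx ?orbT.
have u_or_farZ x : x != a -> x != b -> (x == u) || (x \in farZ).
  move=> xa xb; case: (eqVneq x u) => //= xu; apply: far_farZ => //.
  by apply: contra xa => /nbr_nbrP; rewrite nbrPE !inE (negbTE xb) orbF.
exists a, b; split => //.
- move: aP; rewrite inE => /andP[_ /existsPn /(_ b)].
  by rewrite ub gsym.
- move=> x xa xb; case/orP: (u_or_farZ x xa xb) => [/eqP -> | /farZ_ab //].
  by rewrite ua ub.
move=> x y xa xb ya yb.
have farZ_nadj z : z \in farZ -> ~~ g u z by rewrite !inE => /andP[/andP[]].
case/orP: (u_or_farZ x xa xb) => [/eqP -> | xZ].
  by case/orP: (u_or_farZ y ya yb) => [/eqP -> | /farZ_nadj //]; rewrite girr.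
case/orP: (u_or_farZ y ya yb) => [/eqP -> | yZ]; first by rewrite gsym farZ_nadj.
case/andP: (farZ_ab x xZ) => xa' xb'; case/andP: (farZ_ab y yZ) => ya' yb'.
by apply: (diamond_free (b:=a) (d:=b)); rewrite // gsym.
Qed.

Lemma hubs_of_bigZ z0 : z0 \in bigZ -> K2_hubs u z0.
Proof.
move=> z0B; have := z0B; rewrite inE => /andP[z0Z z0_big].
have [z0u uz0] : z0 != u /\ ~~ g u z0 by move: z0Z; rewrite !inE => /andP[/andP[-> ->]].
have /cards1P[z1 bigZE] : #|bigZ| == 1%N.
  by case: tight_counts => _ [[B0 _] | [-> _]] //; rewrite (card0_eq B0) in z0B.
move: z0B; rewrite bigZE inE => /eqP z01; subst z1.
have z0_adj : {in nbrP, forall v, g z0 v}.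
  apply: common_full => //.
  case: tight_counts => _ [[B0 _] | [_ <-]]; first by rewrite bigZE cards1 in B0.
  by rewrite /sum_ncommon bigZE big_set1.
have farZ1 z : z \in farZ -> z = z0.
  move=> zZ; apply/eqP/negPn/negP => zz0.
  have zS : z \in smallZ.
    by rewrite inE zZ /=; apply: contra zz0 => z_big; rewrite -in_set1 -bigZE inE zZ.
  have z_gt1 : (1 < #|common z|)%N by rewrite -/(ncommon z) smallZ_ncommon.
  have [b bz] : exists b, b \in common z by apply/card_gt0P; apply: ltnW.
  have [a az ab] := card_gt1_neq b z_gt1.
  have [c [z0c ca cb]] := card_gt2_neq2 a b z0_big.
  move: az bz z0c; rewrite !inE => /andP[ua za] /andP[ub zb] /andP[uc z0c].
  apply: (far_three_commons_free (farZ_far zZ) (farZ_far z0Z) zz0 ua ub uc ab ca cb) => //.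
  exact/z0_adj/nbr_nbrP.
have u_nbr x : x != u -> x != z0 -> g u x.
  by move=> xu xz0; apply: contraT => ux; move: xz0; rewrite (farZ1 x (far_farZ xu ux)) eqxx.
split; rewrite // 1?eq_sym //.
- move=> x xu xz0; have ux := u_nbr x xu xz0.
  by rewrite gsym ux /= gsym z0_adj // nbr_nbrP.
move=> x y xu xz0 yu yz0; apply/negP => xy; have := no_triangle y.
by rewrite /in_triangle u_nbr //=; apply/negP/negPn/existsP; exists x; rewrite u_nbr.
Qed.

Lemma tight_hubs : exists a b, K2_hubs a b.
Proof.
case: (posnP #|bigZ|) => [/hubs_of_no_bigZ // | /card_gt0P[z0 /hubs_of_bigZ]].
by exists u, z0.
Qed.
End TightCase.
End ChordedCycleFree.

Lemma spectral_count_forces (R : realFieldType) (l sigma P S F Z C : R) :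
  0 <= l -> 0 <= sigma -> 0 <= S -> 0 <= F -> 0 <= Z ->
  6 <= 1 + P + S + F + Z ->
  2 * (1 + P + S + F + Z) - 4 <= l ^+ 2 ->
  l ^+ 2 <= P + S + sigma + F + C ->
  l * sigma <= S + sigma + F ->
  [\/ P = 0 /\ C = 0, P = 1 /\ C <= Z | 2 <= P /\ C + 2 <= 2 * Z + P] ->
  [/\ S = 0, 2 <= P & 2 * Z + P <= C + 2].
Proof.
move=> l0 sg0 S0 F0 Z0 n6 lower upper sigma_le cases.
have l_ge : 14 / 5 <= l by (* l^2 >= 8 > (14/5)^2 *) rewrite expr2 in lower; nra.
have sigma_small : 9 / 5 * sigma <= S + F by nra.
case: cases => [[P0 C0] | [P1 CZ] | [P2 CZ]]; [exfalso; lra | exfalso; lra |].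
have S_F : S + F <= 0 by lra.
by split; lra.
Qed.

Section SubEigenvector.
Variables (R : realFieldType) (n : nat) (g : rel 'I_n).
Hypotheses (gsym : symmetric g) (girr : irreflexive g).
Hypothesis gNC : ~ has_chorded_cycle g.
Variables (u : 'I_n) (y : 'I_n -> R) (l : R).
Hypotheses (y_ge0 : forall i, 0 <= y i) (y_le1 : forall i, y i <= 1) (y_u : y u = 1).
Hypothesis l_ge0 : 0 <= l.
Let adj_sum j := \sum_i (g i j)%:R * y i.
Hypothesis y_sub : forall j, l * y j <= adj_sum j.
Let sigma := \sum_(i in nbrT g u) y i.

Lemma sq_le_sum_nbr : l ^+ 2 <= \sum_(v in nbr g u) adj_sum v.
Proof.
rewrite expr2 -{2}[l]mulr1 -y_u; apply: le_trans (ler_wpM2l l_ge0 (y_sub u)) _.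
rewrite /adj_sum mulr_sumr [X in _ <= X]big_mkcond /=; apply: ler_sum => i _.
by rewrite inE gsym mulrCA; case: (g u i); rewrite ?mul1r ?mul0r //; apply: y_sub.
Qed.

Lemma adj_sum_split v : adj_sum v <=
  1 + \sum_(i in nbr g u) (g i v)%:R * y i + (\sum_(i in far g u) g i v)%N%:R.
Proof.
rewrite /adj_sum (bigD1 u) //= y_u mulr1 -addrA lerD //; first by case: (g u v).
rewrite (bigID (g u)) /=; apply: lerD.
  rewrite [X in X <= _](eq_bigl (fun i => i \in nbr g u)) // => i.
  by rewrite inE; case: (eqVneq i u) => [->|]; rewrite ?girr.
rewrite natr_sum [X in X <= _](eq_bigl (fun i => i \in far g u)) => [|i]; last by rewrite inE.
by apply: ler_sum => i _; case: (g i v); rewrite ?mul1r ?mul0r.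
Qed.

Lemma sum_nbr_nbr_le :
  \sum_(v in nbr g u) \sum_(i in nbr g u) (g i v)%:R * y i <= sigma.
Proof.
rewrite exchange_big /= (eq_bigr (fun i => (ncommon g u i)%:R * y i)) => [|i _]; last first.
  by rewrite -mulr_suml -natr_sum sum_nbr_adj.
rewrite (bigID (in_triangle g u)) /= [X in _ + X]big1 ?addr0 => [|i]; last first.
  by rewrite inE => /andP[ui iT]; rewrite ncommon_nbrP ?mul0r.
rewrite /sigma (eq_bigl (fun i => i \in nbrT g u)) => [|i]; last first.
  by rewrite !inE /in_triangle; case: (g u i).
apply: ler_sum => i; rewrite inE => /andP[ui _]; apply: ler_piMl => //.
by rewrite (ler_nat R _ 1) ncommon_nbr_le1.
Qed.

Lemma l_sigma_le : l * sigma <= #|nbrT g u|%:R + sigma + #|farT g u|%:R.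
Proof.
rewrite /sigma mulr_sumr; apply: le_trans (ler_sum _ (fun i _ => y_sub i)) _.
apply: le_trans (ler_sum _ (fun i _ => adj_sum_split i)) _.
rewrite !big_split /= sumr_const -!addrA; apply: lerD => //; apply: lerD.
  apply: le_trans sum_nbr_nbr_le; apply: ler_sum_subset => [|i _].
    by apply/subsetP => i; rewrite !inE => /andP[].
  by apply: sumr_ge0 => j _; apply: mulr_ge0 => //; case: (g j i).
by rewrite -natr_sum ler_nat sum_nbrT_far_le.
Qed.

Lemma l_sq_le : l ^+ 2 <= #|nbrP g u|%:R + #|nbrT g u|%:R + sigma + #|farT g u|%:R
                          + (sum_ncommon g u (farZ g u))%:R.
Proof.
apply: le_trans sq_le_sum_nbr _; apply: le_trans (ler_sum _ (fun i _ => adj_sum_split i)) _.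
rewrite !big_split /= sumr_const card_nbr natrD -!addrA; do 2 apply: lerD => //.
apply: lerD; first exact: sum_nbr_nbr_le.
by rewrite -natr_sum -natrD ler_nat; apply: sum_nbr_far_le.
Qed.

Lemma subeigenvector_hubs :
  (6 <= n)%N -> 2 * n%:R - 4 <= l ^+ 2 -> exists a b, K2_hubs g a b.
Proof.
move=> n_ge6 l_sq_ge; have sigma_ge0 : 0 <= sigma by apply: sumr_ge0.
have := card_partition girr u; set P := #|nbrP g u|; set T := #|nbrT g u|.
set F := #|farT g u|; set Z := #|farZ g u|; set C := sum_ncommon g u (farZ g u) => n_eq.
have [T0 P_ge2 tight] : [/\ T%:R = 0 :> R, 2 <= P%:R :> R & 2 * Z%:R + P%:R <= C%:R + 2 :> R].
  apply: (spectral_count_forces l_ge0 sigma_ge0 _ _ _ _ _ l_sq_le l_sigma_le) => //.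
  - by rewrite -(natrD R 1) -!natrD -n_eq (ler_nat R 6).
  - by move: l_sq_ge; rewrite {1}n_eq !natrD.
  - case: (sum_ncommon_farZ_cases gsym girr gNC u) => [[-> ->] | [-> le] | [le2 le]].
    + exact: Or31.
    + by apply: Or32; rewrite ler_nat.
    + by apply: Or33; rewrite (ler_nat R 2) le2 -natrM -!natrD ler_nat.
apply: (tight_hubs gsym girr gNC (u := u)).
- move=> v; apply/negP => vT; move/eqP: T0; rewrite pnatr_eq0 cards_eq0 => /eqP T_empty.
  by have := in_set0 v; rewrite -T_empty inE vT.
- by move: P_ge2; rewrite (ler_nat R 2).
- by move: tight; rewrite -natrM -!natrD ler_nat.
Qed.
End SubEigenvector.

Lemma K2_hubs_iso n (g : rel 'I_n) a b : symmetric g -> irreflexive g -> (2 <= n)%N ->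
  K2_hubs g a b -> graph_iso g (@K2 n).
Proof.
move=> gsym girr n2 [ab nab adj indep].
pose o0 : 'I_n := Ordinal (ltnW n2); pose o1 : 'I_n := Ordinal n2.
pose s1 := tperm a o0; pose f := (s1 * tperm (s1 b) o1)%g.
have fa : f a = o0.
  have s1b : s1 b != o0 by rewrite -{1}(tpermL a o0) -/s1 (inj_eq perm_inj) eq_sym.
  by rewrite /f permM tpermL tpermD // eq_sym.
have fb : f b = o1 by rewrite /f permM tpermL.
have f_lt2 i : (f i < 2)%N = (i == a) || (i == b).
  apply/idP/idP => [lt2 | /orP[] /eqP ->]; rewrite ?fa ?fb //.
  have : (f i == o0) || (f i == o1).
    by rewrite -!val_eqE /=; move: lt2; case: (nat_of_ord (f i)) => [|[|]].
  by rewrite -{1}fa -fb !(inj_eq perm_inj).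
exists f => i j; rewrite /K2 !f_lt2.
case: (eqVneq i a) => [-> | ia]; case: (eqVneq j a) => [-> | ja] //=; rewrite ?girr //.
- case: (eqVneq j b) => [-> | jb] //=; first by rewrite (negbTE nab).
  by case/andP: (adj j ja jb) => + _; rewrite gsym.
- case: (eqVneq i b) => [-> | ib] //=; first by rewrite gsym (negbTE nab).
  by case/andP: (adj i ia ib).
case: (eqVneq i b) => [-> | ib]; case: (eqVneq j b) => [-> | jb] //=; rewrite ?girr //.
- by case/andP: (adj j ja jb) => _; rewrite gsym.
- by case/andP: (adj i ia ib).
- exact/negbTE/indep.
Qed.

Lemma K2_eigenvalue (R : realType) n : (3 <= n)%N ->
  eigenvalue (adjmx R (@K2 n)) (Num.sqrt (2 * (n - 2)%:R)).
Proof.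
move=> n3; have n2 : (2 <= n)%N by apply: ltnW.
set mu := Num.sqrt _.
have mu2 : mu * mu = 2 * (n - 2)%:R by rewrite -expr2 sqr_sqrtr // mulr_ge0.
apply/eigenvalueP; exists (\row_(j < n) (if (j < 2)%N then mu else 2)).
  apply/rowP => j; rewrite !mxE.
  pose F (k : nat) := (if (k < 2)%N then mu else 2) * (((k < 2)%N != (j < 2)%N) : nat)%:R.
  under eq_bigr => i _ do rewrite !mxE.
  rewrite -/(\sum_(i < n) F i) -(big_mkord xpredT F).
  rewrite (@big_cat_nat _ _ _ 2 0 n _ _ (leq0n 2) n2) /= big_nat_recr //= big_nat_recr //=.
  rewrite big_nil add0r (eq_big_nat _ _ (F2 := fun _ => F 2%N)); last first.
    by move=> i /andP[i2 _]; rewrite /F ltnNge i2.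
  rewrite sumr_const_nat /F /=.
  case: (ltnP j 2) => j2 /=; rewrite ?mulr0 ?mulr1 ?add0r ?addr0.
    by rewrite mulrC mu2 mulr_natr.
  by rewrite mul0rn addr0 mulr_natr mulr2n.
apply/eqP => /rowP /(_ (Ordinal n3)); rewrite !mxE /=.
by move/eqP; rewrite pnatr_eq0.
Qed.

Lemma nonneg_subeigenvector (R : realFieldType) n (A : 'M[R]_n) (r : R) :
  (forall i j, 0 <= A i j) -> 0 <= r -> eigenvalue A r ->
  exists u (y : 'I_n -> R), [/\ (forall i, 0 <= y i), (forall i, y i <= 1), y u = 1 &
     forall j, r * y j <= \sum_i A i j * y i].
Proof.
move=> A_ge0 r_ge0 /eigenvalueP [v vA v_neq0].
have [i1 vi1] : exists i1, v 0 i1 != 0.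
  apply/existsP; apply: contraNT v_neq0 => /existsPn v0.
  by apply/eqP/rowP => i; rewrite mxE; apply/eqP/negPn.
(* y := |v| / max |v|; the triangle inequality turns r v = v A into r |v| <= |v| A. *)
pose a i : R := `|v 0 i|.
have [u _ a_max] := arg_maxP a (P := predT) (i0 := i1) isT.
have au_gt0 : 0 < a u by apply: lt_le_trans (a_max i1 isT); rewrite normr_gt0.
exists u, (fun i => a i / a u); split.
- by move=> i; rewrite divr_ge0 ?normr_ge0 ?ltW.
- by move=> i; rewrite ler_pdivrMr // mul1r; apply: a_max.
- by rewrite divff // gt_eqF.
move=> j; under eq_bigr => i _ do rewrite mulrA.
rewrite -mulr_suml mulrA; apply: ler_wpM2r; first by rewrite invr_ge0 ltW.
have rvj : r * v 0 j = \sum_i v 0 i * A i j.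
  by have := congr1 (fun M : 'M[R]_(1, n) => M 0 j) vA; rewrite /= !mxE => <-.
have : `|r * v 0 j| <= \sum_i `|v 0 i * A i j| by rewrite rvj ler_norm_sum.
rewrite normrM ger0_norm // => /le_trans; apply; apply: ler_sum => i _.
by rewrite normrM (ger0_norm (A_ge0 i j)) mulrC.
Qed.

Theorem theorem1p1 (R : realType) (n : nat) (g : rel 'I_n) (rG rK : R) :
  (6 <= n)%N -> simple_graph g ->
  is_spectral_radius (adjmx R g) rG ->
  is_spectral_radius (adjmx R (@K2 n)) rK ->
  rK <= rG ->
  has_chorded_cycle g \/ graph_iso g (@K2 n).
Proof.
move=> n_ge6 [gsym girr] [rG_eig _] [_ rK_max] rK_le.
have [gC | gNC] := classic (has_chorded_cycle g); [by left | right].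
have mu_le : Num.sqrt (2 * (n - 2)%:R) <= rG :> R.
  by apply: le_trans rK_le; apply/rK_max/K2_eigenvalue; apply: leq_trans n_ge6.
have rG_ge0 : 0 <= rG by apply: le_trans mu_le; apply: sqrtr_ge0.
have [|u [y [y_ge0 y_le1 y_u y_sub]]] := nonneg_subeigenvector _ rG_ge0 rG_eig.
  by move=> i j; rewrite mxE ler0n.
have rG_sq_ge : 2 * n%:R - 4 <= rG ^+ 2.
  have := ler_pM (sqrtr_ge0 _) (sqrtr_ge0 _) mu_le mu_le.
  rewrite -expr2 sqr_sqrtr ?mulr_ge0 // natrB; last by apply: leq_trans n_ge6.
  by rewrite -expr2; lra.
have [|a [b hubs]] :=
  subeigenvector_hubs gsym girr gNC y_ge0 y_le1 y_u rG_ge0 _ n_ge6 rG_sq_ge.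
  by move=> j; apply: le_trans (y_sub j) _; under eq_bigr do rewrite mxE.
by apply: K2_hubs_iso hubs => //; apply: leq_trans n_ge6.
Qed.
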